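(* Let $n,k\ge 1$ be integers and let $X=\{0,1,\ldots,k\}^n$ with the $\ell_1$-metric. Suppose $X=X_1\cup\cdots\cup X_n$ and that for every point $x\in X$ the open ball of radius $n+1$ about $x$ is contained in some $X_i$. Then there is an index $i$ such that some $2$-component of $X_i$ contains two points whose $i$-th coordinates differ by $k$.
   Context: For $Y\subseteq X$ and $r>0$, two points of $Y$ lie in the same $r$-component of $Y$ if there is a sequence $y_0,\dots,y_m$ in $Y$ from one to the other with $d(y_j,y_{j+1})<r$ for all $j$. *)

From mathcomp Require Import all_boot.
Set Implicit Arguments. Unset Strict Implicit. Unset Printing Implicit Defensive.

Definition grid (n k : nat) : finType := {ffun 'I_n -> 'I_k.+1}.

Definition absdiff (a b : nat) : nat := maxn a b - minn a b.

Definition l1dist (n k : nat) (x y : grid n k) : nat :=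
  \sum_(j < n) absdiff (x j) (y j).

Definition same_rcomp (n k : nat) (Y : {set grid n k}) (r : nat)
    (x y : grid n k) : Prop :=
  exists s : seq (grid n k),
    [/\ all (fun z => z \in Y) (x :: s),
        path (fun a b => l1dist a b < r) x s
      & last x s = y].

(* Label a point x of {0..k}^n by the least i such that x is not 2-connected
   inside X_i to the face {x_i = 0}.  If no 2-component of any X_i meets both
   {x_i = 0} and {x_i = k}, this is a Sperner labelling of Kuhn's triangulation
   of the cube, and Sperner's lemma (the number of fully labelled simplices is
   odd, by the usual door-counting induction on the dimension) gives a simplex
   carrying every label.  Its vertices lie within l1-distance n of its first
   vertex, hence all in one X_j, and consecutive vertices are at distance 1;
   so the vertices labelled j and j+1 are 2-connected in X_j, although the
   second is 2-connected to {x_j = 0} and the first is not. *)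

From mathcomp Require Import all_boot fingroup perm zify.
Set Implicit Arguments. Unset Strict Implicit. Unset Printing Implicit Defensive.

Lemma even_sum_fixfree_involution (T : finType) (g : T -> T) (F : T -> nat) :
  involutive g -> (forall x, g x != x) -> (forall x, F (g x) = F x) ->
  ~~ odd (\sum_x F x).
Proof.
move=> gK gx Fg; pose below x := enum_rank x < enum_rank (g x).
have below_g x : below (g x) = ~~ below x.
  rewrite /below gK ltn_neqAle -leqNgt andbC.
  case: leqP => //= _; apply/negP => /eqP/val_inj/enum_rank_inj/esym/eqP.
  by rewrite eq_sym (negbTE (gx x)).
rewrite (bigID below) /= [X in _ + X](reindex_inj (inv_inj gK)) /=.
under [X in _ + X]eq_bigl => x do rewrite below_g negbK.
by under [X in _ + X]eq_bigr => x _ do rewrite Fg; rewrite addnn odd_double.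
Qed.

Lemma odd_sum_ord_ends n (G : 'I_n.+2 -> nat) :
  (forall j : 'I_n.+2, j != ord0 -> j != ord_max -> ~~ odd (G j)) ->
  odd (\sum_j G j) = odd (G ord0 + G ord_max).
Proof.
move=> Geven; rewrite (big_morph odd oddD (erefl (odd 0))).
rewrite (bigD1 ord0) // (bigD1 ord_max) //= big1 ?addbF ?oddD //.
by move=> j /andP [j0 jm]; apply/negbTE/Geven.
Qed.

Lemma imset_setC1_eq (aT rT : finType) (f : aT -> rT) a b :
  f a = f b -> f @: [set~ a] = f @: [set~ b].
Proof.
suff sub c d : f c = f d -> f @: [set~ c] \subset f @: [set~ d].
  by move=> fab; apply/eqP; rewrite eqEsubset !sub.
move=> fcd; apply/subsetP => y /imsetP [x]; rewrite !inE => xc ->.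
have [xd | xd] := eqVneq x d; last by apply: imset_f; rewrite !inE.
by rewrite xd -fcd; apply: imset_f; rewrite !inE eq_sym -xd.
Qed.

Section FacetDoors.

Variables (m : nat) (f : 'I_m.+1 -> 'I_m.+1).

Definition facet_doors := [set j | f @: [set~ j] == [set~ ord_max]].

Lemma card_setC1_ord (j : 'I_m.+1) : #|[set~ j]| = m.
Proof. by rewrite cardsC1 card_ord. Qed.

Lemma facet_doors_surjective : f @: setT = setT -> #|facet_doors| = 1.
Proof.
move=> fT.
have finj : injective f.
  by move=> x y; apply/(imset_injP (f := f) (D := setT)) => //; rewrite fT.
have [j0 _ fj0] : exists2 j0, j0 \in setT & ord_max = f j0.
  by apply/imsetP; rewrite fT inE.
suff -> : facet_doors = [set j0] by rewrite cards1.
apply/setP => j; rewrite !inE.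
have -> : f @: [set~ j] = [set~ f j].
  apply/eqP; rewrite eqEcard card_imset // !card_setC1_ord leqnn andbT.
  by apply/subsetP => y /imsetP [x]; rewrite !inE => xj ->; rewrite inj_eq.
by rewrite fj0 (inj_eq (@setC_inj _)) (inj_eq (@set1_inj _)) inj_eq // eq_sym.
Qed.

Lemma facet_doors_not_surjective :
  f @: setT != setT -> ~~ odd #|facet_doors|.
Proof.
move=> fT; have [-> | [j]] := set_0Vmem facet_doors; first by rewrite cards0.
rewrite !inE => /eqP door_j.
have fj : f j != ord_max.
  apply: contra fT => /eqP fj; rewrite eqEsubset subsetT /=.
  apply/subsetP => y _; have [-> | ym] := eqVneq y ord_max.
    by rewrite -fj imset_f.
  have : y \in f @: [set~ j] by rewrite door_j !inE.
  by case/imsetP => x _ ->; rewrite imset_f.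
have /imsetP [t] : f j \in f @: [set~ j] by rewrite door_j !inE.
rewrite !inE => tj ftj.
suff -> : facet_doors = [set j; t] by rewrite cards2 eq_sym tj.
apply/setP => j'; rewrite !inE.
have [-> | j'j] := eqVneq j' j; first by rewrite door_j !eqxx.
have [-> | j't] /= := eqVneq j' t; first by rewrite -(imset_setC1_eq ftj) door_j !eqxx.
apply/negP => /eqP door_j'.
have : {in [set~ j'] &, injective f}.
  by apply/imset_injP; rewrite door_j' !card_setC1_ord.
move=> /(_ j t); rewrite !inE [j == j']eq_sym [t == j']eq_sym j'j j't => /(_ isT isT ftj) jt.
by rewrite jt eqxx in tj.
Qed.

Lemma odd_card_facet_doors : odd #|facet_doors| = (f @: setT == setT).
Proof.
have [/eqP fT | fT] := boolP (f @: setT == setT).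
  by rewrite facet_doors_surjective.
exact/negbTE/facet_doors_not_surjective.
Qed.

End FacetDoors.

Lemma inordE n m : (inord m : 'I_n.+1) = (if m < n.+1 then m else 0) :> nat.
Proof. by rewrite /inord val_insubd. Qed.

Lemma setC1_lift n (i : 'I_n.+1) : [set~ i] = lift i @: setT.
Proof.
apply/setP => y; rewrite !inE; case: (unliftP i y) => [j ->|->].
  by rewrite eq_sym neq_lift imset_f ?inE.
by rewrite eqxx; apply/esym/imsetP => -[j _ /eqP]; rewrite (negbTE (neq_lift _ _)).
Qed.

Definition extend (T : Type) m (y : {ffun 'I_m -> T}) (a : T) : {ffun 'I_m.+1 -> T} :=
  [ffun i => if unlift ord_max i is Some i' then y i' else a].

Lemma extend_lift (T : Type) m (y : {ffun 'I_m -> T}) a i : extend y a (lift ord_max i) = y i.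
Proof. by rewrite ffunE liftK. Qed.

Lemma extend_max (T : Type) m (y : {ffun 'I_m -> T}) a : extend y a ord_max = a.
Proof. by rewrite ffunE unlift_none. Qed.

Section KuhnTriangulation.

Variable K : nat.

(* The Kuhn simplex (v, p) of {0..K+1}^N has the vertices
   v + e_(p^-1 0) + ... + e_(p^-1 (t-1)) for 0 <= t <= N. *)
Definition simplex N := ({ffun 'I_N -> 'I_K.+1} * {perm 'I_N})%type.

Definition vertex N (S : simplex N) (t : nat) : grid N K.+1 :=
  [ffun i => inord (S.1 i + (S.2 i < t))].

Lemma vertexE N (S : simplex N) t i : vertex S t i = S.1 i + (S.2 i < t) :> nat.
Proof. by rewrite ffunE inordK //; have := ltn_ord (S.1 i); case: (_ < t); lia. Qed.

Definition sperner_labelling N (l : grid N K.+1 -> nat) :=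
  forall x, [/\ l x <= N, forall i, x i = 0 :> nat -> l x <> i
              & forall i, x i = K.+1 :> nat -> l x <= i].

Definition label N l (S : simplex N) (t : 'I_N.+1) : 'I_N.+1 := inord (l (vertex S t)).

Definition door N l (S : simplex N) (j : 'I_N.+1) : bool :=
  label l S @: [set~ j] == [set~ ord_max].

Definition fully_labelled N l (S : simplex N) : bool := label l S @: setT == setT.

Lemma labelE N l (S : simplex N) t :
  sperner_labelling l -> label l S t = l (vertex S t) :> nat.
Proof. by move=> sl; rewrite inordK // ltnS; case: (sl (vertex S t)). Qed.

Lemma odd_sum_doors N l (S : simplex N) :
  odd (\sum_j door l S j) = fully_labelled l S.
Proof.
rewrite /fully_labelled -odd_card_facet_doors -sum1dep_card [in RHS]big_mkcond /=.
by congr odd; apply: eq_bigr => j _; rewrite /door; case: ifP.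
Qed.

Section InteriorFacets.

Variables (n : nat) (j : 'I_n.+2).
Hypotheses (j_gt0 : 0 < j) (j_lt : j < n.+1).

Definition swap_steps (S : simplex n.+1) : simplex n.+1 :=
  (S.1, (S.2 * tperm (inord j.-1) (inord j))%g).

Lemma swap_stepsK : involutive swap_steps.
Proof. by case=> v p; rewrite /swap_steps /= -mulgA tperm2 mulg1. Qed.

Lemma swap_steps_neq S : swap_steps S != S.
Proof.
case: S => v p; rewrite /swap_steps xpair_eqE eqxx /=; apply/negP => /eqP.
rewrite -[X in _ = X]mulg1 => /mulgI /(congr1 (fun q : {perm _} => q (inord j))).
by rewrite tpermR perm1 => /(congr1 val) /=; rewrite !inordK //; lia.
Qed.

Lemma vertex_swap_steps S (t : 'I_n.+2) : t != j -> vertex (swap_steps S) t = vertex S t.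
Proof.
move=> /eqP tj; have {}tj : t <> j :> nat by move/ord_inj.
apply/ffunP => i; apply: ord_inj.
rewrite !vertexE /= permM; congr (_ + nat_of_bool _).
by case: tpermP => [->|->|//]; rewrite !inordK //; try apply/idP/idP; lia.
Qed.

Lemma door_swap_steps l S : door l (swap_steps S) j = door l S j.
Proof.
congr (_ == _); apply: eq_in_imset => t; rewrite !inE => tj.
by rewrite /label vertex_swap_steps.
Qed.

End InteriorFacets.

Lemma even_interior_doors n l (j : 'I_n.+2) :
  j != ord0 -> j != ord_max -> ~~ odd (\sum_(S : simplex n.+1) door l S j).
Proof.
rewrite -!val_eqE /= => j0 jm.
have j_gt0 : 0 < j by lia.
have j_lt : j < n.+1 by have := ltn_ord j; lia.
apply: (even_sum_fixfree_involution (g := swap_steps j));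
  [exact: swap_stepsK | exact: swap_steps_neq | by move=> S; rewrite door_swap_steps].
Qed.

Definition rot_pred n : {perm 'I_n.+1} := perm (@ord_pred_inj n.+1).

Lemma rot_predE n (a : 'I_n.+1) : rot_pred n a = (if a == ord0 then n else a.-1) :> nat.
Proof.
rewrite permE /= -val_eqE /=; have := ltn_ord a.
case: (val a) => [|b] /= b_lt; first by rewrite modn_small.
by rewrite modnDr modn_small //; lia.
Qed.

Lemma rot_pred_eq_max n (a : 'I_n.+1) : (rot_pred n a == ord_max) = (a == ord0).
Proof. by rewrite -!val_eqE /= rot_predE -val_eqE /=; have := ltn_ord a; case: ifP; lia. Qed.

Lemma rot_predV_eq0 n (a : 'I_n.+1) : ((rot_pred n)^-1%g a == ord0) = (a == ord_max).
Proof.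
rewrite -(inj_eq (@perm_inj _ (rot_pred n))) permKV.
by have /eqP -> : rot_pred n ord0 == ord_max by rewrite rot_pred_eq_max.
Qed.

Section BoundaryFacets.

Variable n : nat.
Implicit Type S : simplex n.+1.

(* The facet of S opposite its first vertex is the facet of [shift S] opposite
   its last vertex.  [shiftable S] fails exactly when the former lies in a face
   x_i = K+1, and [unshiftable S] fails exactly when the latter lies in a face
   x_i = 0. *)
Definition shift S : simplex n.+1 :=
  ([ffun i => inord (S.1 i + (S.2 i == ord0))], (S.2 * rot_pred n)%g).

Definition unshift S : simplex n.+1 :=
  ([ffun i => inord (S.1 i - (S.2 i == ord_max))], (S.2 * (rot_pred n)^-1)%g).

Definition shiftable S := [forall i, (S.2 i == ord0) ==> (S.1 i < K)].

Definition unshiftable S := [forall i, (S.2 i == ord_max) ==> (0 < S.1 i)].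

Lemma shiftK S : shiftable S -> unshift (shift S) = S.
Proof.
case: S => v p /forallP /= v_lt; rewrite /shift /unshift /=; congr (_, _).
  apply/ffunP => i; rewrite !ffunE permM rot_pred_eq_max; apply: ord_inj.
  move: (v_lt i) (ltn_ord (v i)).
  by case: eqP => /= _ vi_lt vi_le; do ?rewrite inordK; lia.
by rewrite mulgK.
Qed.

Lemma unshiftK S : unshiftable S -> shift (unshift S) = S.
Proof.
case: S => v p /forallP /= v_gt0; rewrite /shift /unshift /=; congr (_, _).
  apply/ffunP => i; rewrite !ffunE permM rot_predV_eq0; apply: ord_inj.
  move: (v_gt0 i) (ltn_ord (v i)).
  by case: eqP => /= _ vi_gt0 vi_le; do ?rewrite inordK; lia.
by rewrite mulgKV.
Qed.

Lemma unshiftable_shift S : unshiftable (shift S) = shiftable S.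
Proof.
apply/eq_forallb => i; rewrite /= permM rot_pred_eq_max ffunE.
by case: eqP => //= _; rewrite addn1 inordE ltnS; case: ifP.
Qed.

Lemma vertex_shift S (t : nat) : shiftable S -> t < n.+1 ->
  vertex (shift S) t = vertex S t.+1.
Proof.
move=> /forallP v_lt t_lt; apply/ffunP => i; apply: ord_inj.
rewrite !vertexE /= ffunE permM rot_predE.
have [p0 | p_ne0] := eqVneq (S.2 i) ord0.
  have := v_lt i; rewrite p0 eqxx /= => vi_lt.
  by rewrite inordK ?addn1 // ltnNge -ltnS t_lt addn0.
have p_gt0 : 0 < S.2 i by rewrite lt0n; move: p_ne0; rewrite -val_eqE.
by rewrite addn0 inord_val; case: ltnP; case: ltnP; lia.
Qed.

Lemma door_shift l S : shiftable S -> door l (shift S) ord_max = door l S ord0.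
Proof.
move=> sS; rewrite /door !setC1_lift -!imset_comp; congr (_ == _).
apply: eq_imset => i /=; rewrite /label vertex_shift ?lift_max // lift0.
Qed.

Lemma sum_door_shiftable l :
  \sum_(S | shiftable S) door l S ord0 = \sum_(S | unshiftable S) door l S ord_max.
Proof.
rewrite [RHS](reindex shift) /=; last first.
  by exists unshift => S; rewrite inE ?unshiftable_shift; [apply: shiftK | apply: unshiftK].
by apply: eq_big => S; rewrite ?unshiftable_shift // => sS; rewrite door_shift.
Qed.

Lemma door_last_unshiftable l S :
  sperner_labelling l -> door l S ord_max -> unshiftable S.
Proof.
move=> sl /eqP dS; apply/forallP => i; apply/implyP => /eqP pi.
rewrite lt0n; apply/negP => /eqP vi0.
have : (inord i : 'I_n.+2) \in label l S @: [set~ ord_max].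
  by rewrite dS !inE -val_eqE /= inordK //; have := ltn_ord i; lia.
case/imsetP => t; rewrite !inE -val_eqE /= => t_max /(congr1 (@nat_of_ord _)).
rewrite labelE // inordK => [li|]; last by have := ltn_ord i; lia.
have [_ l_ne _] := sl (vertex S t); apply: (l_ne i) => //.
by rewrite vertexE pi vi0 /=; have := ltn_ord t; case: ltnP => //; lia.
Qed.

(* The facet opposite the first vertex lies in the face x_n = K+1. *)
Definition on_top S := (S.2 ord_max == ord0) && (S.1 ord_max == ord_max).

Lemma door_first_on_top l S :
  sperner_labelling l -> ~~ shiftable S -> door l S ord0 -> on_top S.
Proof.
move=> sl; rewrite negb_forall => /existsP [i].
rewrite negb_imply -leqNgt => /andP [/eqP pi vi] /eqP dS.
have vK : S.1 i = K :> nat by have := ltn_ord (S.1 i); lia.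
have : (inord n : 'I_n.+2) \in label l S @: [set~ ord0].
  by rewrite dS !inE -val_eqE /= inordK // neq_ltn ltnSn.
case/imsetP => t; rewrite !inE -val_eqE /= => t_gt0 /(congr1 (@nat_of_ord _)).
rewrite labelE // inordK // => ln.
have [_ _ l_le] := sl (vertex S t).
have : l (vertex S t) <= i by apply: l_le; rewrite vertexE pi vK /= lt0n t_gt0 addn1.
rewrite -ln => n_le.
have im : i = ord_max by apply: ord_inj => /=; have := ltn_ord i; lia.
by rewrite im in pi vK; rewrite /on_top pi eqxx -val_eqE /= vK.
Qed.

End BoundaryFacets.

Section TopFace.

Variable n : nat.

Definition top_simplex (x : simplex n) : simplex n.+1 :=
  (extend x.1 ord_max, lift_perm ord_max ord0 x.2).

(* Junk value: the identity when [p ord_max != ord0], so that it is always injective. *)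
Definition face_perm (p : {perm 'I_n.+1}) (i : 'I_n) : 'I_n :=
  if p ord_max == ord0 then odflt i (unlift ord0 (p (lift ord_max i))) else i.

Lemma face_permE (p : {perm 'I_n.+1}) i :
  p ord_max = ord0 -> lift ord0 (face_perm p i) = p (lift ord_max i).
Proof.
move=> p_max; rewrite /face_perm p_max eqxx; case: unliftP => [j -> //|].
by rewrite -p_max => /perm_inj/eqP; rewrite eq_sym (negbTE (neq_lift _ _)).
Qed.

Lemma face_perm_inj (p : {perm 'I_n.+1}) : injective (face_perm p).
Proof.
have [/eqP p_max | p_max] := boolP (p ord_max == ord0) => a b; last first.
  by rewrite /face_perm (negbTE p_max).
by move/(congr1 (lift ord0)); rewrite !face_permE // => /perm_inj /lift_inj.
Qed.

Definition face_simplex (S : simplex n.+1) : simplex n :=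
  ([ffun i => S.1 (lift ord_max i)], perm (@face_perm_inj S.2)).

Lemma top_simplex_on_top x : on_top (top_simplex x).
Proof. by rewrite /on_top /= lift_perm_id extend_max !eqxx. Qed.

Lemma top_simplexK : cancel top_simplex face_simplex.
Proof.
case=> v p; rewrite /face_simplex /top_simplex /=; congr (_, _).
  by apply/ffunP => i; rewrite ffunE extend_lift.
apply/permP => i; rewrite permE /face_perm lift_perm_id eqxx lift_perm_lift.
by rewrite liftK.
Qed.

Lemma face_simplexK S : on_top S -> top_simplex (face_simplex S) = S.
Proof.
case: S => v p /andP [/eqP p_max /eqP v_max].
rewrite /face_simplex /top_simplex /=; congr (_, _).
  apply/ffunP => i; rewrite !ffunE.
  by case: unliftP => [j ->|->]; rewrite ?ffunE.
apply/permP => i; case: (unliftP ord_max i) => [j ->|->].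
  by rewrite lift_perm_lift permE face_permE.
by rewrite lift_perm_id.
Qed.

Lemma vertex_top_simplex x (t : nat) :
  vertex (top_simplex x) t.+1 = extend (vertex x t) ord_max.
Proof.
apply/ffunP => i; apply: ord_inj; rewrite vertexE.
case: (unliftP ord_max i) => [j ->|->].
  by rewrite /= !extend_lift lift_perm_lift lift0 vertexE.
by rewrite /= !extend_max lift_perm_id addn1.
Qed.

Definition top_labelling (l : grid n.+1 K.+1 -> nat) (y : grid n K.+1) : nat :=
  l (extend y ord_max).

Lemma sperner_labelling_top l :
  sperner_labelling l -> sperner_labelling (top_labelling l).
Proof.
move=> sl y; have [l_le l_ne l_ge] := sl (extend y ord_max); split.
- by have := l_ge ord_max; rewrite extend_max => /(_ erefl).
- by move=> i yi; have := l_ne (lift ord_max i); rewrite extend_lift lift_max; apply.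
- by move=> i yi; have := l_ge (lift ord_max i); rewrite extend_lift lift_max; apply.
Qed.

Lemma door_top_simplex l x : sperner_labelling l ->
  door l (top_simplex x) ord0 = fully_labelled (top_labelling l) x.
Proof.
move=> sl; have sl' := sperner_labelling_top sl.
have label_lift t : label l (top_simplex x) (lift ord0 t) =
                    lift ord_max (label (top_labelling l) x t).
  by apply: ord_inj; rewrite lift_max !labelE // lift0 vertex_top_simplex.
rewrite /door /fully_labelled !setC1_lift -imset_comp (eq_imset _ label_lift).
by rewrite imset_comp (inj_eq (imset_inj (@lift_inj _ ord_max))).
Qed.

End TopFace.

Lemma sum_door_last n l : sperner_labelling l ->
  \sum_(S : simplex n.+1) door l S ord_max =
  \sum_(S : simplex n.+1 | unshiftable S) door l S ord_max.
Proof.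
move=> sl; rewrite [LHS](bigID (@unshiftable n)) /= [X in _ + X]big1 ?addn0 //.
move=> S not_u; case: (boolP (door l S ord_max)) => // dS.
by rewrite (door_last_unshiftable sl dS) in not_u.
Qed.

Lemma sum_door_first_outer n l : sperner_labelling l ->
  \sum_(S : simplex n.+1 | ~~ shiftable S) door l S ord0 =
  \sum_(x : simplex n) fully_labelled (top_labelling l) x.
Proof.
move=> sl; have -> : \sum_(S | ~~ shiftable S) door l S ord0 =
                     \sum_(S | on_top S) door l S ord0.
  rewrite big_mkcond [RHS]big_mkcond; apply: eq_bigr => S _ /=.
  case: (boolP (on_top S)) => [/andP [/eqP p_max /eqP v_max] | not_top].
    suff -> : ~~ shiftable S by [].
    by apply/forallP => /(_ ord_max); rewrite p_max v_max ltnn.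
  case: (boolP (shiftable S)) => //= sS; case: (boolP (door l S ord0)) => // dS.
  by rewrite (door_first_on_top sl sS dS) in not_top.
rewrite (reindex (@top_simplex n)) /=; last first.
  by exists (@face_simplex n) => S; rewrite inE => ?; [apply: top_simplexK | apply: face_simplexK].
by apply: eq_big => x; rewrite ?top_simplex_on_top // => _; rewrite door_top_simplex.
Qed.

Theorem odd_fully_labelled N l :
  sperner_labelling l -> odd (\sum_(S : simplex N) fully_labelled l S).
Proof.
elim: N l => [|n IH] l sl.
  have full0 (S : simplex 0) : fully_labelled l S.
    by apply/eqP/setP => y; rewrite inE; apply/imsetP; exists ord0; rewrite ?inE // !ord1.
  under eq_bigr => S _ do rewrite full0.
  by rewrite sum1_card card_prod card_ffun card_Sn !card_ord.
have -> : odd (\sum_S fully_labelled l S) = odd (\sum_S \sum_j door l S j).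
  rewrite [LHS](big_morph odd oddD (erefl (odd 0))).
  rewrite [RHS](big_morph odd oddD (erefl (odd 0))).
  by apply: eq_bigr => S _; rewrite oddb odd_sum_doors.
rewrite exchange_big /= odd_sum_ord_ends; last by move=> j; apply: even_interior_doors.
rewrite (bigID (@shiftable n)) /= sum_door_shiftable sum_door_last //.
rewrite sum_door_first_outer // addnAC addnn oddD odd_double.
exact: IH (sperner_labelling_top sl).
Qed.

End KuhnTriangulation.

Lemma absdiffC a b : absdiff a b = absdiff b a.
Proof. by rewrite /absdiff maxnC minnC. Qed.

Lemma absdiff_addr a b : absdiff a (a + b) = b.
Proof. rewrite /absdiff; lia. Qed.

Lemma l1distC n k (x y : grid n k) : l1dist x y = l1dist y x.
Proof. by apply: eq_bigr => i _; rewrite absdiffC. Qed.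

Definition rstep n k (Y : {set grid n k}) (r : nat) : rel (grid n k) :=
  [rel a b | [&& a \in Y, b \in Y & l1dist a b < r]].

Lemma rstep_sym n k (Y : {set grid n k}) r : symmetric (rstep Y r).
Proof. by move=> a b; rewrite /rstep /= l1distC andbCA. Qed.

Lemma same_rcomp_connect n k (Y : {set grid n k}) r x y :
  x != y -> connect (rstep Y r) x y -> same_rcomp Y r x y.
Proof.
move=> xy /connectP [[|z p] x_p y_last]; first by rewrite y_last eqxx in xy.
have in_Y a s : path (rstep Y r) a s -> all (fun b => b \in Y) s.
  by elim: s a => //= b s IH a /andP [/and3P [_ -> _] /IH].
exists (z :: p); split => //; last by apply: sub_path x_p => a b /and3P [].
have := in_Y x _ x_p; case/andP: x_p => /and3P [xY _ _] _ zp.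
by rewrite -cat1s all_cat zp /= xY.
Qed.

Section KuhnVertices.

Variables (K N : nat) (S : simplex K N).

Lemma l1dist_vertex0 t : l1dist (vertex S 0) (vertex S t) <= N.
Proof.
rewrite /l1dist -[X in _ <= X]card_ord -sum1_card.
by apply: leq_sum => i _; rewrite !vertexE ltn0 addn0 absdiff_addr leq_b1.
Qed.

Lemma l1dist_vertexS t : t < N -> l1dist (vertex S t) (vertex S t.+1) = 1.
Proof.
move=> t_lt; rewrite /l1dist (bigD1 ((S.2)^-1%g (Ordinal t_lt))) //= big1.
  by rewrite !vertexE permKV ltnn ltnSn /= addn0 addn1 /absdiff; lia.
move=> i i_ne; rewrite !vertexE.
have : S.2 i != Ordinal t_lt by apply: contra i_ne => /eqP <-; rewrite permK.
rewrite -val_eqE /= => pi_ne.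
have -> : (S.2 i < t.+1) = (S.2 i < t) by rewrite ltnS leq_eqVlt (negbTE pi_ne).
by rewrite /absdiff maxnn minnn subnn.
Qed.

Lemma connect_vertex (Y : {set grid N K.+1}) :
  (forall t, t <= N -> vertex S t \in Y) ->
  forall a b, a <= N -> b <= N -> connect (rstep Y 2) (vertex S a) (vertex S b).
Proof.
move=> in_Y.
have from0 t : t <= N -> connect (rstep Y 2) (vertex S 0) (vertex S t).
  elim: t => [|t IH] t_le; first exact: connect0.
  apply: connect_trans (IH (ltnW t_le)) (connect1 _).
  by rewrite /rstep /= l1dist_vertexS // !in_Y // ltnW.
move=> a b a_le b_le; apply: connect_trans (from0 b b_le).
by rewrite (sym_connect_sym (@rstep_sym _ _ Y 2)) from0.
Qed.

End KuhnVertices.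

Section FirstExit.

Variables (T : finType) (N : nat) (W : 'I_N -> {set T}).

Definition first_out (x : T) : nat := find (fun i => x \notin W i) (enum 'I_N).

Lemma first_out_le x : first_out x <= N.
Proof. by rewrite -[X in _ <= X]size_enum_ord find_size. Qed.

Lemma first_out_notin x (i : 'I_N) : first_out x = i -> x \notin W i.
Proof.
move=> xi; have := @nth_find _ i (fun i => x \notin W i) (enum 'I_N).
by rewrite has_find size_enum_ord -/(first_out x) xi nth_ord_enum; apply.
Qed.

Lemma first_out_in x (i : 'I_N) : i < first_out x -> x \in W i.
Proof. by move/(before_find i); rewrite nth_ord_enum => /negbFE. Qed.

End FirstExit.

Lemma exists_simplex_straddling K N (W : 'I_N -> {set grid N K.+1}) :
  (forall i (x : grid N K.+1), x i = 0 :> nat -> x \in W i) ->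
  (forall i (x : grid N K.+1), x i = K.+1 :> nat -> x \notin W i) ->
  exists S : simplex K N, forall i,
    exists t0 t1, [/\ t0 <= N, t1 <= N, vertex S t0 \notin W i & vertex S t1 \in W i].
Proof.
move=> W0 WK; pose l := first_out W.
have sl : sperner_labelling l.
  move=> x; split; first exact: first_out_le.
  - by move=> i /(W0 i) xW /first_out_notin; rewrite xW.
  - by move=> i /(WK i) xW; rewrite leqNgt; apply: contra xW; apply: first_out_in.
have [S fS] : exists S, fully_labelled l S.
  apply/existsP; apply: contraLR (odd_fully_labelled sl) => /existsPn none.
  by rewrite big1 // => S _; rewrite (negbTE (none S)).
have attained a : a <= N -> exists2 t, t <= N & l (vertex S t) = a.
  move=> a_le; have : (inord a : 'I_N.+1) \in label l S @: setT by rewrite (eqP fS) inE.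
  case/imsetP => t _ /(congr1 (@nat_of_ord _)); rewrite labelE // inordK // => ta.
  by exists t => //; exact: ltn_ord t.
exists S => i.
have [t0 t0_le t0_lab] := attained i (ltnW (ltn_ord i)).
have [t1 t1_le t1_lab] := attained i.+1 (ltn_ord i).
exists t0, t1; split => //; first exact: first_out_notin.
by apply: first_out_in; move: t1_lab; rewrite /l => ->.
Qed.

Section FaceReach.

Variables (n k : nat) (Y : {set grid n k}) (i : 'I_n).

Definition reach_face0 : {set grid n k} :=
  [set x | [exists y : grid n k, (y i == 0 :> nat) && connect (rstep Y 2) y x]].

Lemma reach_face0_face (x : grid n k) : x i = 0 :> nat -> x \in reach_face0.
Proof. by move=> x0; rewrite inE; apply/existsP; exists x; rewrite x0 connect0. Qed.

Lemma reach_face0_connect x z :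
  x \in reach_face0 -> connect (rstep Y 2) x z -> z \in reach_face0.
Proof.
rewrite !inE => /existsP [y /andP [y0 yx] xz].
by apply/existsP; exists y; rewrite y0 (connect_trans yx xz).
Qed.

Lemma reach_face0_crossing (x : grid n k) : x \in reach_face0 -> x i != 0 :> nat ->
  exists y : grid n k, y i = 0 :> nat /\ same_rcomp Y 2 y x.
Proof.
rewrite inE => /existsP [y /andP [/eqP y0 yx]] x_ne0; exists y; split => //.
by apply: same_rcomp_connect yx; apply: contra_neq x_ne0 => <-.
Qed.

End FaceReach.

Theorem lemma2p2 (n k : nat) (hn : 0 < n) (hk : 0 < k)
    (Xs : 'I_n -> {set grid n k})
    (hcover : forall x : grid n k, exists i : 'I_n, x \in Xs i)
    (hball : forall x : grid n k, exists i : 'I_n,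
        forall y : grid n k, l1dist x y < n.+1 -> y \in Xs i) :
  exists i : 'I_n, exists y z : grid n k,
    [/\ same_rcomp (Xs i) 2 y z & absdiff (y i) (z i) = k].
Proof.
case: k hk Xs hcover hball => // K _ Xs _ hball.
pose W i := reach_face0 (Xs i) i.
have [/existsP [i /existsP [z /andP [zW /eqP zK]]] | /existsPn no_cross] :=
  boolP [exists i, exists z : grid n K.+1, (z \in W i) && (z i == K.+1 :> nat)].
  have z_ne0 : z i != 0 :> nat by rewrite zK.
  have [y [y0 yz]] := reach_face0_crossing zW z_ne0.
  by exists i, y, z; rewrite y0 zK /absdiff max0n min0n subn0.
have WK i (x : grid n K.+1) : x i = K.+1 :> nat -> x \notin W i.
  by move=> xK; have /existsPn /(_ x) := no_cross i; rewrite xK eqxx andbT.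
have [S straddle] := exists_simplex_straddling (fun i => @reach_face0_face _ _ (Xs i) i) WK.
have [j in_Xj] := hball (vertex S 0).
have [t0 [t1 [t0_le t1_le out_t0 in_t1]]] := straddle j.
have t1t0 : connect (rstep (Xs j) 2) (vertex S t1) (vertex S t0).
  by apply: connect_vertex => // t _; apply: in_Xj; rewrite ltnS l1dist_vertex0.
by rewrite (reach_face0_connect in_t1 t1t0) in out_t0.
Qed.
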